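(* Let $G$ be a valise $(N,k)$ Adinkra with associated doubly even code $C$. Then the automorphism group of $G$ has order $2^{N-2k-a}$, and its orbits on the vertex set are $2^{k+a}$ in number and all of equal size, where $a=0$ if $C$ contains the all-ones word $(1,\dots,1)$ and $a=1$ otherwise.
   Context: An Adinkra of dimension $N$ is a finite connected simple graph $G=(V,E)$ with: a bipartition of $V$ into bosons and fermions (every edge joins a boson and a fermion); a height function (disregarded for valise Adinkras); a coloring of $E$ by colors $\{1,\dots,N\}$ such that each vertex is incident to exactly one edge of each color; an edge parity $\pi:E\to\mathbb{Z}_2$ (parity $1$ = dashed); such that every path with edge colors $(i,j)$, $i\ne j$, lies in a unique 4-cycle with colors $(i,j,i,j)$, each having an odd number of dashed edges. If $|V|=2^{N-k}$, $G$ is an $(N,k)$ Adinkra. Switching a vertex reverses the parity of its incident edges. An automorphism of $G$ is a permutation of $V$ preserving adjacency, edge colors and the boson/fermion bipartition which becomes parity-preserving after switching some set of vertices; automorphisms inducing the same permutation are identified. A doubly even $(N,k)$ code is a $k$-dimensional subspace of $\mathbb{Z}_2^N$ all of whose elements have Hamming weight $\equiv0\pmod4$. Labeling the vertices of an $N$-cube Adinkra by $\mathbb{Z}_2^N$ so that color-$i$ edges join $v$ and $v+e_i$, every $(N,k)$ Adinkra is equivalent to one obtained by identifying vertices whose labels differ by elements of some doubly even $(N,k)$ code $C$; this $C$ is the associated code. *)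

From HB Require Import structures.
From mathcomp Require Import all_boot all_order all_algebra all_fingroup.
Set Implicit Arguments. Unset Strict Implicit. Unset Printing Implicit Defensive.
Import GRing.Theory.
Local Open Scope ring_scope.

(* A (valise) Adinkra of dimension N on the finite vertex type V.
   adj  : adjacency of a simple graph (symmetric, irreflexive relation),
   col  : color of the edge {u,v} (only meaningful when adj u v),
   par  : parity of the edge {u,v} (true = dashed),
   bos  : the bosons (the others are fermions).
   Heights are disregarded (valise). *)
Definition adinkra (N : nat) (V : finType) (adj : rel V) (col : V -> V -> 'I_N)
    (par : V -> V -> bool) (bos : pred V) : Prop :=
  [/\ irreflexive adj /\ symmetric adj,
      (forall u v, adj u v -> (col u v = col v u) /\ (par u v = par v u)),
      (forall u v, connect adj u v),
      (forall u v, adj u v -> bos u != bos v) /\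
      (forall (v : V) (i : 'I_N), exists! w, (adj v w /\ col v w = i)) &
      (forall v w x, adj v w -> adj w x -> col v w != col w x ->
         (exists! y, [/\ adj x y, adj y v, col x y = col v w & col y v = col w x])
         /\ (forall y, adj x y -> adj y v -> col x y = col v w -> col y v = col w x ->
               odd (par v w + par w x + par x y + par y v)%N))].

(* Automorphisms are identified with permutations. *)
Definition is_adinkra_aut (N : nat) (V : finType) (adj : rel V) (col : V -> V -> 'I_N)
    (par : V -> V -> bool) (bos : pred V) (s : {perm V}) : bool :=
  [&& [forall u, forall v, adj (s u) (s v) == adj u v],
      [forall u, bos (s u) == bos u],
      [forall u, forall v, adj u v ==> (col (s u) (s v) == col u v)] &
      [exists S : {set V}, forall u, forall v,
         adj u v ==> (par (s u) (s v) == par u v (+) (u \in S) (+) (v \in S))]].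

Definition adinkra_aut (N : nat) (V : finType) (adj : rel V) (col : V -> V -> 'I_N)
    (par : V -> V -> bool) (bos : pred V) : {set {perm V}} :=
  [set s | is_adinkra_aut adj col par bos s].

Definition hweight (N : nat) (w : 'rV['F_2]_N) : nat := #|[set i : 'I_N | w 0 i != 0]|.

Definition doubly_even_code (N k : nat) (C : 'M['F_2]_N) : Prop :=
  \rank C = k /\ (forall w : 'rV['F_2]_N, (w <= C)%MS -> (4 %| hweight w)%N).

Definition unitv (N : nat) (i : 'I_N) : 'rV['F_2]_N := delta_mx 0 i.

(* C (row space) is the associated code of the Adinkra: the Adinkra is
   equivalent to the quotient of the N-cube by C, i.e. there is a surjective
   labeling of its vertices by Z_2^N whose fibres are exactly the cosets of C,
   such that color-i edges join (the images of) v and v + e_i. *)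
Definition associated_code (N : nat) (V : finType) (adj : rel V) (col : V -> V -> 'I_N)
    (C : 'M['F_2]_N) : Prop :=
  exists lab : 'rV['F_2]_N -> V,
    [/\ (forall v, exists x, lab x = v),
        (forall x y, lab x = lab y <-> (x - y <= C)%MS) &
        (forall x (i : 'I_N), (adj (lab x) (lab (x + unitv i)))
                              /\ (col (lab x) (lab (x + unitv i)) = i))].

Definition ones (N : nat) : 'rV['F_2]_N := const_mx 1.

From HB Require Import structures.
From mathcomp Require Import all_boot all_order all_algebra all_fingroup.
From mathcomp Require Import zify.
Set Implicit Arguments. Unset Strict Implicit. Unset Printing Implicit Defensive.
Import GRing.Theory.

(* Label the vertices by Z_2^N modulo C.  Color-preservation forces every
   automorphism to be a translation v |-> v + c, and preservation of the
   bipartition forces c to have even weight.  The parities form a 1-cochain on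
   the cube whose coboundary is 1 on every square; so does the "sign" cochain
   x |-> x_1 + ... + x_(i-1), and their sum is closed, hence exact.  This yields
   an explicit switching set for the translation by c, which is well defined on
   the quotient exactly when c is orthogonal to C.  Hence Aut is isomorphic to
   K/C where K = C^perp :&: ones^perp has dimension N - k - a, and since
   translations act freely, all orbits have 2^(N-2k-a) elements. *)

Local Open Scope ring_scope.

Lemma F2_cases (a : 'F_2) : a = 0 \/ a = 1.
Proof. by case: a => [[|[|m]] H] //=; [left|right]; apply/val_inj. Qed.

Lemma F2_nat n : (n%:R : 'F_2) = (odd n)%:R.
Proof. by rewrite -(Fp_nat_mod (p:=2)) // modn2. Qed.

Lemma F2_addxx (a : 'F_2) : a + a = 0.
Proof. by case: (F2_cases a) => ->; rewrite ?addr0 // -[1 + 1]/(2%:R) F2_nat. Qed.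

(* Decides implications between equations in F_2 by evaluation at every
   assignment of the variables. *)
Ltac F2_brute := intros; apply/eqP;
  repeat match goal with H : ?a = _ |- _ =>
    let T := type of a in unify T 'F_2; move/eqP: H end;
  repeat match goal with a : ?T |- _ =>
    unify T 'F_2; case: (F2_cases a) => ->; clear a end;
  vm_compute; intros; solve [reflexivity | discriminate].

Definition b2f (b : bool) : 'F_2 := b%:R.

Lemma b2f_xor a b : b2f (a (+) b) = b2f a + b2f b.
Proof. by case: a; case: b; rewrite /b2f /= ?addr0 ?add0r ?F2_addxx. Qed.

Lemma b2f_inj : injective b2f.
Proof. by case; case => //= /eqP; rewrite /b2f /= ?oner_eq0 // eq_sym oner_eq0. Qed.

Lemma b2f_eq1 (z : 'F_2) : b2f (z == 1) = z.
Proof. by case: (F2_cases z) => ->; rewrite /b2f /= ?eqxx // eq_sym oner_eq0. Qed.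

Lemma F2_nat_neq0 (a : 'F_2) : ((a != 0)%:R : 'F_2) = a.
Proof. by case: (F2_cases a) => ->; rewrite ?eqxx // oner_neq0. Qed.

Section Cube.
Variable N : nat.
Implicit Types (x y : 'rV['F_2]_N) (i j : 'I_N).
Local Notation e := (@unitv N).

Lemma unitvE i j : e i 0 j = (j == i)%:R.
Proof. by rewrite /unitv mxE eqxx. Qed.

Lemma unitvK x i : x + e i + e i = x.
Proof. by rewrite -addrA; apply/rowP => l; rewrite !mxE F2_addxx addr0. Qed.

Definition trunc_row (m : nat) x : 'rV['F_2]_N := \row_l (if (l < m)%N then x 0 l else 0).

Lemma trunc_row0 x : trunc_row 0 x = 0.
Proof. by apply/rowP => l; rewrite !mxE. Qed.

Lemma trunc_row_full x : trunc_row N x = x.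
Proof. by apply/rowP => l; rewrite !mxE ltn_ord; congr (x _ _); apply/val_inj; rewrite /= ord1. Qed.

Lemma trunc_rowS x m (lt_mN : (m < N)%N) :
  trunc_row m.+1 x = trunc_row m x + x 0 (Ordinal lt_mN) *: e (Ordinal lt_mN).
Proof.
apply/rowP => l; rewrite !mxE eqxx /= ltnS leq_eqVlt.
have -> : (l == Ordinal lt_mN :> 'I_N) = (nat_of_ord l == m) by [].
case: (ltngtP l m) => [||Hl] /=; rewrite ?mulr0 ?addr0 //.
by rewrite mulr1 add0r; congr (x _ _); apply/val_inj.
Qed.

Lemma trunc_rowD m x y : trunc_row m (x + y) = trunc_row m x + trunc_row m y.
Proof. by apply/rowP => l; rewrite !mxE; case: ifP; rewrite ?addr0. Qed.

Lemma trunc_row_unitv m j : trunc_row m (e j) = if (j < m)%N then e j else 0.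
Proof.
apply/rowP => l; rewrite !mxE eqxx /=.
case: (eqVneq l j) => [->|Hl] /=; first by case: ifP; rewrite ?mxE ?eqxx.
by case: ifP; case: ifP => //; rewrite ?mxE ?(negbTE Hl) ?andbF.
Qed.

Lemma cube_ind (P : 'rV['F_2]_N -> Prop) :
  P 0 -> (forall x i, P x -> P (x + e i)) -> forall x, P x.
Proof.
move=> P0 PS x; rewrite -(trunc_row_full x).
suff: forall m, (m <= N)%N -> P (trunc_row m x) by apply.
elim=> [|m IH] lt_mN; first by rewrite trunc_row0.
rewrite (trunc_rowS x lt_mN).
case: (F2_cases (x 0 (Ordinal lt_mN))) => ->; rewrite ?scale0r ?addr0 ?scale1r.
- exact: IH (ltnW lt_mN).
- exact: PS (IH (ltnW lt_mN)).
Qed.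

Lemma cube_constant (T : Type) (F : 'rV['F_2]_N -> T) :
  (forall x i, F (x + e i) = F x) -> forall x, F x = F 0.
Proof. by move=> FP; apply: cube_ind => // x i <-; apply: FP. Qed.

Section ClosedCochain.
Variable s : 'rV['F_2]_N -> 'I_N -> 'F_2.
Hypothesis s_edge : forall x i, s (x + e i) i = s x i.
Hypothesis s_square : forall x i j, i != j ->
  s x i + s (x + e i) j + s (x + e j) i + s x j = 0.

(* Integral of s along the path from 0 to (the first m coordinates of) x that
   flips the coordinates in increasing order. *)
Definition path_integral (m : nat) x : 'F_2 :=
  \sum_(i < N | (i < m)%N) x 0 i * s (trunc_row i x) i.

Lemma path_integralS m x (lt_mN : (m < N)%N) :
  path_integral m.+1 x =
  path_integral m x + x 0 (Ordinal lt_mN) * s (trunc_row m x) (Ordinal lt_mN).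
Proof.
rewrite /path_integral (bigD1 (Ordinal lt_mN)) /= ?ltnSn // addrC; congr (_ + _).
apply: eq_bigl => i; rewrite ltnS leq_eqVlt.
have -> : (i != Ordinal lt_mN) = (nat_of_ord i != m) by [].
by case: (ltngtP i m).
Qed.

Lemma path_integral_unitv x j m : (m <= N)%N ->
  path_integral m (x + e j) =
  path_integral m x + (if (j < m)%N then s (trunc_row m x) j else 0).
Proof.
elim: m => [|m IH] lt_mN; first by rewrite /path_integral !big_pred0 // addr0.
rewrite !(path_integralS _ lt_mN) (IH (ltnW lt_mN)).
rewrite [(x + e j) 0 _]mxE unitvE trunc_rowD trunc_row_unitv (trunc_rowS x lt_mN).
set m' := Ordinal lt_mN; set z := trunc_row m x.
have -> : (m' == j) = (m == j :> nat) by [].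
rewrite [(j < m.+1)%N]ltnS eq_sym.
case: (ltngtP j m) => lt_jm /=.
- have ne_m'j : m' != j by rewrite neq_ltn lt_jm orbT.
  rewrite addr0; case: (F2_cases (x 0 m')) => ->; first by rewrite scale0r !mul0r !addr0.
  rewrite scale1r !mul1r; move: (s_square z ne_m'j).
  move: (s z j) (s (z + e j) m') (s z m') (s (z + e m') j) (path_integral m x); F2_brute.
- by rewrite !addr0.
- have -> : j = m' by apply/val_inj.
  rewrite !addr0; case: (F2_cases (x 0 m')) => ->.
    by rewrite scale0r mul0r !addr0 !add0r mul1r.
  by rewrite scale1r mul1r s_edge F2_addxx mul0r addr0 -addrA F2_addxx addr0.
Qed.

Definition cube_potential : 'rV['F_2]_N -> 'F_2 := path_integral N.

Lemma cube_potentialE x i : cube_potential (x + e i) = cube_potential x + s x i.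
Proof. by rewrite /cube_potential path_integral_unitv // ltn_ord trunc_row_full. Qed.

End ClosedCochain.

Definition coord_sum x : 'F_2 := \sum_i x 0 i.
Definition dotv x y : 'F_2 := \sum_i x 0 i * y 0 i.
Definition prefix_sum y i : 'F_2 := \sum_(l < N | (l < i)%N) y 0 l.
Definition prefix_form x y : 'F_2 := \sum_i x 0 i * prefix_sum y i.

Lemma coord_sumD x y : coord_sum (x + y) = coord_sum x + coord_sum y.
Proof. by rewrite /coord_sum -big_split; apply: eq_bigr => i _; rewrite mxE. Qed.

Lemma coord_sum_unitv i : coord_sum (e i) = 1.
Proof.
rewrite /coord_sum (bigD1 i) //= unitvE eqxx big1 ?addr0 // => l /negbTE Hl.
by rewrite unitvE Hl.
Qed.

Lemma prefix_sumD x y i : prefix_sum (x + y) i = prefix_sum x i + prefix_sum y i.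
Proof. by rewrite /prefix_sum -big_split; apply: eq_bigr => l _; rewrite mxE. Qed.

Lemma prefix_sum_unitv j i : prefix_sum (e j) i = (j < i)%N%:R.
Proof.
rewrite /prefix_sum (eq_bigr (fun l => (l == j)%:R)); last by move=> l _; rewrite unitvE.
case: ltnP => Hj.
  by rewrite (bigD1 j) //= eqxx big1 ?addr0 // => l /andP[_ /negbTE ->].
by rewrite big1 // => l Hl; case: eqP Hl => // ->; rewrite ltnNge Hj.
Qed.

Lemma prefix_sum_edge x i : prefix_sum (x + e i) i = prefix_sum x i.
Proof. by rewrite prefix_sumD prefix_sum_unitv ltnn addr0. Qed.

Lemma prefix_sum_square x i j : i != j ->
  prefix_sum x i + prefix_sum (x + e i) j + prefix_sum (x + e j) i + prefix_sum x j = 1.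
Proof.
move=> ne_ij; rewrite !prefix_sumD !prefix_sum_unitv.
have /orP[] : (i < j)%N || (j < i)%N by rewrite -neq_ltn.
  by move=> lt_ij; rewrite lt_ij ltnNge (ltnW lt_ij) /=; move: (prefix_sum x i) (prefix_sum x j); F2_brute.
by move=> lt_ji; rewrite lt_ji ltnNge (ltnW lt_ji) /=; move: (prefix_sum x i) (prefix_sum x j); F2_brute.
Qed.

Lemma prefix_formDl x x' y : prefix_form (x + x') y = prefix_form x y + prefix_form x' y.
Proof. by rewrite /prefix_form -big_split; apply: eq_bigr => l _; rewrite mxE mulrDl. Qed.

Lemma prefix_form_unitv j y : prefix_form (e j) y = prefix_sum y j.
Proof.
rewrite /prefix_form (bigD1 j) //= unitvE eqxx mul1r big1 ?addr0 // => l /negbTE Hl.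
by rewrite unitvE Hl mul0r.
Qed.

(* Splitting the product of the two coordinate sums into the terms below, on
   and above the diagonal. *)
Lemma prefix_form_sym w c :
  prefix_form w c + prefix_form c w = coord_sum w * coord_sum c + dotv w c.
Proof.
have -> : coord_sum w * coord_sum c = prefix_form w c + dotv w c + prefix_form c w.
  rewrite /coord_sum big_distrl /=.
  have -> : \sum_i w 0 i * coord_sum c =
      \sum_(i < N) (\sum_(l < N | (l < i)%N) w 0 i * c 0 l + w 0 i * c 0 i
             + \sum_(l < N | (i < l)%N) w 0 i * c 0 l).
    apply: eq_bigr => i _; rewrite /coord_sum big_distrr /= (bigID (fun l : 'I_N => (l < i)%N)) /=.
    rewrite -addrA; congr (_ + _); rewrite (bigD1 i) ?ltnn //=; congr (_ + _).
    by apply: eq_bigl => l; rewrite -leqNgt ltn_neqAle andbC eq_sym.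
  rewrite !big_split /=; congr (_ + _ + _).
  - by apply: eq_bigr => i _; rewrite /prefix_sum big_distrr.
  - rewrite /prefix_form /prefix_sum.
    under eq_bigr do rewrite big_mkcond /=.
    rewrite exchange_big /=; apply: eq_bigr => l _.
    rewrite big_distrr /= big_mkcond /= [RHS]big_mkcond; apply: eq_bigr => i _.
    by case: ifP; rewrite ?mulr0 // mulrC.
move: (prefix_form w c) (prefix_form c w) (dotv w c); F2_brute.
Qed.

End Cube.

Section DoublyEvenCodes.
Variable N : nat.
Implicit Types (x y w c : 'rV['F_2]_N).

Lemma dotvC x y : dotv x y = dotv y x.
Proof. by apply: eq_bigr => i _; rewrite mulrC. Qed.

Lemma dotv_mx x y : dotv x y = (x *m y^T) 0 0.
Proof. by rewrite mxE; apply: eq_bigr => i _; rewrite mxE. Qed.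

Lemma coord_sum_mx x : coord_sum x = (x *m (ones N)^T) 0 0.
Proof. by rewrite mxE; apply: eq_bigr => i _; rewrite !mxE mulr1. Qed.

Lemma orth_rowP m (C : 'M['F_2]_(m, N)) c :
  (c *m C^T = 0) <-> (forall w, (w <= C)%MS -> dotv w c = 0).
Proof.
split=> [c_orth w /submxP[u ->] | c_orth].
  by rewrite dotvC dotv_mx trmx_mul mulmxA c_orth mul0mx mxE.
apply/rowP => r; rewrite [RHS]mxE -[RHS](c_orth (row r C)) ?row_sub // dotvC mxE.
by apply: eq_bigr => i _; rewrite !mxE.
Qed.

Lemma hweight_sum w : hweight w = (\sum_i (w 0%R i != 0%R))%N.
Proof.
rewrite /hweight -sum1_card big_mkcond /=; apply: eq_bigr => i _.
by rewrite inE; case: (_ != _).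
Qed.

Lemma coord_sum_hweight w : coord_sum w = (hweight w)%:R.
Proof. by rewrite hweight_sum natr_sum; apply: eq_bigr => i _; rewrite F2_nat_neq0. Qed.

Lemma dotv_count w w' : dotv w w' = (\sum_i ((w 0%R i * w' 0%R i)%R != 0%R))%N%:R.
Proof. by rewrite natr_sum; apply: eq_bigr => i _; rewrite F2_nat_neq0. Qed.

Lemma hweightD w w' :
  (hweight (w + w') + 2 * \sum_i ((w 0%R i * w' 0%R i)%R != 0%R) = hweight w + hweight w')%N.
Proof.
rewrite !hweight_sum big_distrr -!big_split /=; apply: eq_bigr => i _.
rewrite mxE; case: (F2_cases (w 0 i)) => ->; case: (F2_cases (w' 0 i)) => ->;
  by rewrite ?F2_addxx ?mulr0 ?mul0r ?mulr1 ?addr0 ?add0r ?eqxx ?oner_neq0.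
Qed.

Variables (k : nat) (C : 'M['F_2]_N).
Hypothesis codeC : doubly_even_code k C.

Lemma doubly_even_orth w w' : (w <= C)%MS -> (w' <= C)%MS -> dotv w w' = 0.
Proof.
case: codeC => _ mod4C Hw Hw'.
have := mod4C _ (addmx_sub Hw Hw'); have := mod4C _ Hw; have := mod4C _ Hw'.
move: (hweightD w w'); rewrite dotv_count; set s := (\sum_i _)%N.
move=> wtD /dvdnP[a Ea] /dvdnP[b Eb] /dvdnP[c Ec]; rewrite Ea Eb Ec in wtD.
have -> : s = (2 * (a + b - c))%N by clearbody s; lia.
by rewrite F2_nat oddM.
Qed.

Lemma doubly_even_coord_sum w : (w <= C)%MS -> coord_sum w = 0.
Proof.
case: codeC => _ mod4C Hw; rewrite coord_sum_hweight F2_nat.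
by case/dvdnP: (mod4C _ Hw) => a ->; rewrite oddM andbF.
Qed.

End DoublyEvenCodes.

Section EvenDual.
Variable N : nat.
Implicit Types (C : 'M['F_2]_N) (c : 'rV['F_2]_N).

Definition ones_defect C : nat := if (ones N <= C)%MS then 0 else 1.

(* The even-weight words orthogonal to C, i.e. C^perp :&: ones^perp. *)
Definition even_dual C := kermx (col_mx C (ones N))^T.

Lemma rank_code_ones C : \rank (col_mx C (ones N)) = (\rank C + ones_defect C)%N.
Proof.
rewrite /ones_defect -addsmxE; case: ifP => [sub1C|notsub1C].
  by rewrite (addsmx_idPl sub1C) addn0.
have := mxrank_sum_cap C (ones N).
have ones_neq0 : ones N != 0 by apply: contraFN notsub1C => /eqP ->; rewrite sub0mx.
rewrite rank_rV ones_neq0.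
have := mxrank_leqif_sup (capmxSr C (ones N)); rewrite rank_rV ones_neq0 => -[le_cap eq_cap].
have : \rank (C :&: ones N)%MS != 1%N.
  apply/negP => /eqP E; move: eq_cap; rewrite E eqxx => /esym.
  by rewrite sub_capmx submx_refl andbT notsub1C.
lia.
Qed.

Lemma rank_code_ones_le C : (\rank C + ones_defect C <= N)%N.
Proof. by rewrite -rank_code_ones rank_leq_col. Qed.

Lemma rank_even_dual C : \rank (even_dual C) = (N - (\rank C + ones_defect C))%N.
Proof. by rewrite /even_dual mxrank_ker mxrank_tr rank_code_ones. Qed.

Lemma even_dualP C c :
  (c <= even_dual C)%MS = (c *m C^T == 0) && (coord_sum c == 0).
Proof.
have mx11_eq0 (M : 'M['F_2]_1) : (M == 0) = (M 0 0 == 0).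
  apply/eqP/eqP => [->|M0]; first by rewrite mxE.
  by apply/matrixP => i j; rewrite !ord1 M0 mxE.
by rewrite /even_dual sub_kermx tr_col_mx mul_mx_row row_mx_eq0 mx11_eq0 coord_sum_mx.
Qed.

Lemma doubly_even_sub_dual k C : doubly_even_code k C -> (C <= even_dual C)%MS.
Proof.
move=> codeC; apply/rV_subP => w Hw.
rewrite even_dualP (doubly_even_coord_sum codeC Hw) eqxx andbT.
by apply/eqP/orth_rowP => w' Hw'; apply: doubly_even_orth codeC _ _ Hw' Hw.
Qed.

End EvenDual.

Lemma card_orbits_uniform (T : finType) (G : {group {perm T}}) n :
  (forall v, #|orbit 'P G v| = n) -> (#|[set orbit 'P G v | v : T]| * n)%N = #|T|.
Proof.
move=> card_orbit; have actsG : [acts G, on [set: T] | 'P].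
  by apply/subsetP => s _; rewrite !inE; apply/subsetP => x _; rewrite inE.
have -> : [set orbit 'P G v | v : T] = orbit 'P G @: [set: T].
  by apply/setP => X; apply/imsetP/imsetP => -[v _ ->]; exists v.
rewrite -cardsT -(card_uniform_partition _ (orbit_partition actsG)) //.
by move=> X /imsetP[v _ ->].
Qed.

Section AdinkraAutomorphisms.
Variables (N k : nat) (V : finType) (adj : rel V) (col : V -> V -> 'I_N).
Variables (par : V -> V -> bool) (bos : pred V) (C : 'M['F_2]_N).
Variable lab : 'rV['F_2]_N -> V.
Hypothesis adinkraG : adinkra adj col par bos.
Hypothesis codeC : doubly_even_code k C.
Hypothesis lab_surj : forall v, exists x, lab x = v.
Hypothesis labE : forall x y, lab x = lab y <-> (x - y <= C)%MS.
Hypothesis lab_edge : forall x i,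
  adj (lab x) (lab (x + unitv i)) /\ col (lab x) (lab (x + unitv i)) = i.

Local Notation e := (@unitv N).
Local Notation Aut := (adinkra_aut adj col par bos).
Implicit Types (x y c w : 'rV['F_2]_N) (i j : 'I_N) (u v : V).

Lemma lab_add x y c : lab x = lab y -> lab (x + c) = lab (y + c).
Proof. by move/labE => Exy; apply/labE; rewrite opprD addrACA subrr addr0. Qed.

Lemma lab_addC x w : (w <= C)%MS -> lab (x + w) = lab x.
Proof. by move=> Hw; apply/labE; rewrite addrC addKr. Qed.

Definition lab_inv v := odflt 0 [pick x | lab x == v].

Lemma lab_invK v : lab (lab_inv v) = v.
Proof.
rewrite /lab_inv; case: pickP => [x /eqP //|nolab].
by case: (lab_surj v) => x Ex; move: (nolab x); rewrite Ex eqxx.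
Qed.

Lemma lab_inv_lab (T : Type) (F : 'rV['F_2]_N -> T) :
  (forall x w, (w <= C)%MS -> F (x + w) = F x) -> forall x, F (lab_inv (lab x)) = F x.
Proof.
move=> FC x; have /(FC x) : (lab_inv (lab x) - x <= C)%MS by apply/labE; rewrite lab_invK.
by rewrite addrC subrK.
Qed.

Lemma lab_nbr x v : adj (lab x) v -> v = lab (x + e (col (lab x) v)).
Proof.
case: adinkraG => _ _ _ [_ nbr_uniq] _ Hv.
case: (nbr_uniq (lab x) (col (lab x) v)) => w [_ Hw].
by rewrite -(Hw _ (lab_edge x (col (lab x) v))) (Hw v (conj Hv erefl)).
Qed.

Lemma adj_labE x y : adj (lab x) (lab y) <-> exists i, lab y = lab (x + e i).
Proof.
split=> [/lab_nbr Ey|[i ->]]; first by exists (col (lab x) (lab y)).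
exact: (lab_edge x i).1.
Qed.

Lemma bos_lab x : bos (lab x) = bos (lab 0) (+) (coord_sum x == 1).
Proof.
elim/cube_ind: x => [|x i IH].
  by rewrite /coord_sum big1 => [|l _]; rewrite ?mxE // eq_sym oner_eq0 addbF.
case: adinkraG => _ _ _ [bos_adj _] _.
have := bos_adj _ _ (lab_edge x i).1; rewrite IH coord_sumD coord_sum_unitv.
case: (F2_cases (coord_sum x)) => ->; rewrite ?add0r ?F2_addxx ?eqxx ?(eq_sym 0) ?oner_eq0;
  by case: (bos (lab (x + e i))); case: (bos (lab 0)).
Qed.

Definition transl_fun c v := lab (lab_inv v + c).

Lemma transl_inj c : injective (transl_fun c).
Proof.
move=> u v /labE; rewrite opprD addrACA subrr addr0 => /labE.
by rewrite !lab_invK.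
Qed.

Definition transl c : {perm V} := perm (@transl_inj c).

Lemma translE c x : transl c (lab x) = lab (x + c).
Proof. by rewrite permE; apply: lab_add; rewrite lab_invK. Qed.

Lemma transl_eqP c c' : transl c = transl c' <-> (c - c' <= C)%MS.
Proof.
split=> [Ecc' | HC].
  by apply/labE; move: (translE c 0) (translE c' 0); rewrite Ecc' !add0r => -> ->.
apply/permP => v; have [x <-] := lab_surj v; rewrite !translE; apply/labE.
by rewrite opprD addrACA subrr add0r.
Qed.

Lemma translD c c' : (transl c * transl c')%g = transl (c + c').
Proof. by apply/permP => v; have [x <-] := lab_surj v; rewrite permM !translE addrA. Qed.

Lemma transl0 : transl 0 = 1%g.
Proof. by apply/permP => v; have [x <-] := lab_surj v; rewrite perm1 translE addr0. Qed.

Lemma transl_adj c u v : adj (transl c u) (transl c v) = adj u v.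
Proof.
have [x <-] := lab_surj u; have [y <-] := lab_surj v; rewrite !translE.
apply/idP/idP => /adj_labE[i Ei]; apply/adj_labE; exists i.
  by apply/labE; move/labE: Ei; rewrite (addrAC x c) opprD addrACA subrr addr0.
by rewrite (lab_add c Ei) addrAC.
Qed.

Lemma transl_col c u v : adj u v -> col (transl c u) (transl c v) = col u v.
Proof.
have [x <-] := lab_surj u => /lab_nbr ->.
by rewrite !translE (addrAC _ _ c) !(lab_edge _ _).2.
Qed.

Definition par_cochain x i : 'F_2 := b2f (par (lab x) (lab (x + e i))).

Lemma par_cochain_shiftC x w i : (w <= C)%MS -> par_cochain (x + w) i = par_cochain x i.
Proof. by move=> Hw; rewrite /par_cochain addrAC !(lab_addC _ Hw). Qed.

Lemma par_cochain_edge x i : par_cochain (x + e i) i = par_cochain x i.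
Proof.
case: adinkraG => _ adj_sym2 _ _ _.
by rewrite /par_cochain unitvK (adj_sym2 _ _ (lab_edge x i).1).2.
Qed.

Lemma par_cochain_square x i j : i != j ->
  par_cochain x i + par_cochain (x + e i) j + par_cochain (x + e j) i + par_cochain x j = 1.
Proof.
case: adinkraG => [[_ adj_sym] adj_sym2 _ _ square] ne_ij.
have [h1 c1] := lab_edge x i; have [h2 c2] := lab_edge (x + e i) j.
have [h3 c3] := lab_edge (x + e j) i; have [h4 c4] := lab_edge x j.
have Eij : lab (x + e j + e i) = lab (x + e i + e j) by rewrite addrAC.
rewrite Eij in h3 c3.
have ne_col : col (lab x) (lab (x + e i)) != col (lab (x + e i)) (lab (x + e i + e j)).
  by rewrite c1 c2.
have h3' : adj (lab (x + e i + e j)) (lab (x + e j)) by rewrite adj_sym.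
have h4' : adj (lab (x + e j)) (lab x) by rewrite adj_sym.
have c3' : col (lab (x + e i + e j)) (lab (x + e j)) = col (lab x) (lab (x + e i)).
  by rewrite -(adj_sym2 _ _ h3).1 c3 c1.
have c4' : col (lab (x + e j)) (lab x) = col (lab (x + e i)) (lab (x + e i + e j)).
  by rewrite -(adj_sym2 _ _ h4).1 c4 c2.
have := (square _ _ _ h1 h2 ne_col).2 _ h3' h4' c3' c4'.
rewrite -(adj_sym2 _ _ h3).2 -(adj_sym2 _ _ h4).2 /par_cochain Eij => odd4.
by rewrite /b2f -!natrD F2_nat odd4.
Qed.

Definition par_twist x i := par_cochain x i + prefix_sum x i.

Lemma par_twist_edge x i : par_twist (x + e i) i = par_twist x i.
Proof. by rewrite /par_twist par_cochain_edge prefix_sum_edge. Qed.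

Lemma par_twist_square x i j : i != j ->
  par_twist x i + par_twist (x + e i) j + par_twist (x + e j) i + par_twist x j = 0.
Proof.
move=> ne_ij; rewrite /par_twist.
move: (par_cochain_square x ne_ij) (prefix_sum_square x ne_ij).
move: (par_cochain x i) (par_cochain (x + e i) j) (par_cochain (x + e j) i) (par_cochain x j).
move: (prefix_sum x i) (prefix_sum (x + e i) j) (prefix_sum (x + e j) i) (prefix_sum x j).
F2_brute.
Qed.

Definition par_potential := cube_potential par_twist.

Lemma par_potentialE x i : par_potential (x + e i) = par_potential x + par_twist x i.
Proof. exact: cube_potentialE par_twist_edge par_twist_square x i. Qed.

(* The vertices to switch so that the translation by c preserves parities. *)
Definition transl_switch c x := par_potential (x + c) + par_potential x + prefix_form x c.

Lemma transl_switch_edge c x i :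
  transl_switch c (x + e i) = transl_switch c x + par_cochain (x + c) i + par_cochain x i.
Proof.
rewrite /transl_switch (addrAC x (e i) c) !par_potentialE prefix_formDl prefix_form_unitv.
rewrite /par_twist prefix_sumD.
move: (par_potential (x + c)) (par_cochain (x + c) i) (prefix_sum x i) (prefix_sum c i).
move: (par_potential x) (par_cochain x i) (prefix_form x c); F2_brute.
Qed.

Lemma transl_par c x i :
  par (lab (x + c)) (lab (x + e i + c)) =
  par (lab x) (lab (x + e i)) (+) (transl_switch c x == 1) (+) (transl_switch c (x + e i) == 1).
Proof.
apply: b2f_inj; rewrite !b2f_xor !b2f_eq1 (addrAC x (e i) c).
rewrite -/(par_cochain (x + c) i) -/(par_cochain x i) transl_switch_edge.
move: (par_cochain (x + c) i) (par_cochain x i) (transl_switch c x); F2_brute.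
Qed.

Definition potential_defect w x := par_potential (x + w) + par_potential x + prefix_form x w.

Lemma potential_defect_const w x : (w <= C)%MS -> potential_defect w x = potential_defect w 0.
Proof.
move=> Hw; move: x; apply: cube_constant => x i.
rewrite /potential_defect (addrAC x (e i) w) !par_potentialE prefix_formDl prefix_form_unitv.
rewrite /par_twist prefix_sumD par_cochain_shiftC //.
move: (par_potential (x + w)) (par_cochain x i) (prefix_sum x i) (prefix_sum w i).
move: (par_potential x) (prefix_form x w); F2_brute.
Qed.

Lemma transl_switch_shiftC c w x : (w <= C)%MS ->
  transl_switch c (x + w) + transl_switch c x = dotv w c.
Proof.
move=> Hw; have := potential_defect_const (x + c) Hw; rewrite -(potential_defect_const x Hw).
have := prefix_form_sym w c; rewrite (doubly_even_coord_sum codeC Hw) mul0r add0r => <-.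
rewrite /transl_switch /potential_defect (addrAC x w c) !prefix_formDl.
move: (par_potential (x + c + w)) (par_potential (x + w)) (par_potential (x + c)).
move: (par_potential x) (prefix_form x c) (prefix_form w c) (prefix_form x w) (prefix_form c w).
F2_brute.
Qed.

Lemma transl_is_aut c : (c <= even_dual C)%MS -> is_adinkra_aut adj col par bos (transl c).
Proof.
rewrite even_dualP => /andP[/eqP c_orth /eqP c_even].
have switchC x w : (w <= C)%MS -> transl_switch c (x + w) = transl_switch c x.
  move=> Hw; move: (transl_switch_shiftC c x Hw).
  rewrite (proj1 (orth_rowP _ _) c_orth w Hw).
  move: (transl_switch c (x + w)) (transl_switch c x); F2_brute.
apply/and4P; split.
- by apply/forallP => u; apply/forallP => v; rewrite transl_adj.
- apply/forallP => u; have [x <-] := lab_surj u.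
  by rewrite translE bos_lab (bos_lab x) coord_sumD c_even addr0.
- by apply/forallP => u; apply/forallP => v; apply/implyP => /transl_col ->.
- apply/existsP; exists [set v | transl_switch c (lab_inv v) == 1].
  apply/forallP => u; apply/forallP => v; apply/implyP.
  have [x <-] := lab_surj u => /lab_nbr ->.
  by rewrite !translE !inE !(lab_inv_lab switchC) transl_par.
Qed.

Lemma aut_lab s x : is_adinkra_aut adj col par bos s ->
  s (lab x) = lab (x + lab_inv (s (lab 0))).
Proof.
case/and4P => /forallP s_adj _ /forallP s_col _.
elim/cube_ind: x => [|x i IH]; first by rewrite add0r lab_invK.
have [adj_xi col_xi] := lab_edge x i.
have adj_s : adj (s (lab x)) (s (lab (x + e i))) by rewrite (eqP (forallP (s_adj _) _)).
have col_s : col (s (lab x)) (s (lab (x + e i))) = i.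
  by rewrite (eqP (implyP (forallP (s_col _) _) adj_xi)).
by rewrite IH in adj_s col_s; rewrite (lab_nbr adj_s) col_s addrAC.
Qed.

(* Comparing the given switching set S with transl_switch along the cube shows
   that transl_switch, hence (by transl_switch_shiftC) c . w, vanishes on C. *)
Lemma aut_lab_inv_dual s : is_adinkra_aut adj col par bos s ->
  (lab_inv (s (lab 0)) <= even_dual C)%MS.
Proof.
move=> s_aut; have s_lab x := aut_lab x s_aut.
case/and4P: s_aut => _ /forallP s_bos _ /existsP[S /forallP s_par].
set c := lab_inv (s (lab 0)) in s_lab *.
rewrite even_dualP; apply/andP; split; last first.
  move: (eqP (s_bos (lab 0))); rewrite s_lab add0r bos_lab.
  case: (F2_cases (coord_sum c)) => ->; rewrite ?eqxx ?oner_eq0 //.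
  by case: (bos (lab 0)).
apply/eqP/orth_rowP => w Hw.
pose chi x := b2f (lab x \in S).
have par_c x i : par_cochain (x + c) i = par_cochain x i + chi x + chi (x + e i).
  have := implyP (forallP (s_par (lab x)) (lab (x + e i))) (lab_edge x i).1.
  by rewrite !s_lab (addrAC x (e i) c) => /eqP /(congr1 b2f); rewrite !b2f_xor.
have switch_chi x : transl_switch c x + chi x = transl_switch c 0 + chi 0.
  apply: (cube_constant (F := fun x => transl_switch c x + chi x)) => y i.
  rewrite transl_switch_edge par_c.
  move: (transl_switch c y) (par_cochain y i) (chi y) (chi (y + e i)); F2_brute.
rewrite -(transl_switch_shiftC c 0 Hw); move: (switch_chi (0 + w)).
rewrite /chi lab_addC //.
move: (transl_switch c (0 + w)) (transl_switch c 0) (b2f (lab 0 \in S)); F2_brute.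
Qed.

Lemma adinkra_autP s : s \in Aut <-> exists2 c, (c <= even_dual C)%MS & s = transl c.
Proof.
rewrite inE; split => [s_aut | [c Hc ->]]; last exact: transl_is_aut.
exists (lab_inv (s (lab 0))); first exact: aut_lab_inv_dual.
by apply/permP => v; have [x <-] := lab_surj v; rewrite aut_lab // translE.
Qed.

Lemma group_set_adinkra_aut : group_set Aut.
Proof.
apply/group_setP; split; first by apply/adinkra_autP; exists 0; rewrite ?sub0mx ?transl0.
move=> s t /adinkra_autP[c Hc ->] /adinkra_autP[c' Hc' ->]; apply/adinkra_autP.
by exists (c + c'); rewrite ?addmx_sub ?translD.
Qed.

Lemma card_adinkra_aut : #|Aut| = (2 ^ (\rank (even_dual C) - k))%N.
Proof.
set D := (even_dual C :\: C)%MS.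
pose f (u : 'rV['F_2]_(\rank D)) := transl (u *m row_base D).
have f_inj : injective f.
  move=> u u' /transl_eqP Cuu'; apply: (row_free_inj (row_base_free D)); apply/eqP.
  rewrite -subr_eq0 -submx0 -(capmx_diff (even_dual C) C) sub_capmx Cuu' andbT.
  by rewrite -mulmxBl; apply: submx_trans (submxMl _ _) _; rewrite eq_row_base.
have -> : Aut = [set f u | u : 'rV_(\rank D)].
  apply/setP => s; apply/idP/imsetP => [/adinkra_autP[c Hc ->]|[u _ ->]].
    have : (c <= D + even_dual C :&: C)%MS by rewrite addsmx_diff_cap_eq.
    case/sub_addsmxP => -[u1 u2] /= Ec.
    have : (u1 *m D <= row_base D)%MS by rewrite eq_row_base submxMl.
    case/submxP => v Ev; exists v => //; apply/transl_eqP.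
    by rewrite Ec -Ev addrC addKr; apply: submx_trans (submxMl _ _) (capmxSr _ _).
  apply/adinkra_autP; exists (u *m row_base D) => //.
  by apply: submx_trans (submxMl _ _) _; rewrite eq_row_base diffmxSl.
rewrite card_imset // card_mx card_Fp // mul1n.
by rewrite -(mxrank_cap_compl (even_dual C) C) (capmx_idPr (doubly_even_sub_dual codeC)) codeC.1 addKn.
Qed.

(* The action is free: translations agreeing at one vertex differ by C. *)
Lemma card_orbit_adinkra_aut v : #|orbit 'P Aut v| = #|Aut|.
Proof.
apply: card_in_imset => s t /adinkra_autP[c _ ->] /adinkra_autP[c' _ ->] /=.
have [x <-] := lab_surj v; rewrite !apermE !translE => /labE Ecc'.
by apply/transl_eqP; rewrite opprD addrACA subrr add0r in Ecc'.
Qed.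

End AdinkraAutomorphisms.

Close Scope ring_scope.
Unset Implicit Arguments.
Set Strict Implicit.

Theorem mainTheorem8 (N k : nat) (V : finType) (adj : rel V) (col : V -> V -> 'I_N)
    (par : V -> V -> bool) (bos : pred V) (C : 'M['F_2]_N) :
  adinkra adj col par bos ->
  #|V| = (2 ^ (N - k))%N ->
  doubly_even_code k C ->
  associated_code adj col C ->
  let a := (if (ones N <= C)%MS then 0 else 1)%N in
  let Aut := adinkra_aut adj col par bos in
  [/\ #|Aut| = (2 ^ (N - 2 * k - a))%N,
      #|[set orbit 'P Aut v | v : V]| = (2 ^ (k + a))%N &
      (forall u v : V, #|orbit 'P Aut u| = #|orbit 'P Aut v|)].
Proof.
move=> adinkraG cardV codeC [lab [lab_surj labE lab_edge]] a Aut.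
have card_aut := card_adinkra_aut adinkraG codeC lab_surj labE lab_edge.
have card_orbit := card_orbit_adinkra_aut adinkraG codeC lab_surj labE lab_edge.
pose AutG := Group (group_set_adinkra_aut adinkraG codeC lab_surj labE lab_edge).
have card_orbits := card_orbits_uniform (G := AutG) card_orbit.
have k_le_dual := mxrankS (doubly_even_sub_dual codeC).
have rank_dual := rank_even_dual C; have le_N := rank_code_ones_le C.
rewrite /ones_defect -/a codeC.1 in rank_dual le_N k_le_dual.
rewrite rank_dual in card_aut k_le_dual.
have dimK : (N - (k + a) - k = N - 2 * k - a)%N by lia.
rewrite -/Aut dimK in card_aut; split => [//||u v]; last by rewrite !card_orbit.
move: card_orbits; rewrite cardV card_aut.
have -> : (2 ^ (N - k) = 2 ^ (k + a) * 2 ^ (N - 2 * k - a))%N.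
  by rewrite -expnD; congr (2 ^ _)%N; lia.
by move/eqP; rewrite eqn_pmul2r ?expn_gt0 // => /eqP.
Qed.
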